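(* Let $n \ge q \ge 1$ be integers and let $r = \lceil n/q \rceil$. Then the optimal competitive ratio of the parallelized greedy algorithm with $n$ agents and at most $q$ iterations is \[ \rho(n,q) = \begin{cases} \frac{1}{r} & \text{if } n \equiv 1 \pmod q,\\ \frac{1}{r+1} & \text{otherwise.}\end{cases} \] Moreover, this value is attained by the following iteration assignment $P^*_{n,q}$: if $n \equiv 1 \pmod q$, then $P^*_{n,q}(i) = \lceil i/(r-1) \rceil$ for $i<n$ and $P^*_{n,q}(n) = q$; otherwise, $P^*_{n,q}(i) = \lceil i/r \rceil$ for all $i \in [n]$.
   Context: A set function $f: 2^S \to \mathbb{R}_{\ge 0}$ on a finite base set $S$ is normalized if $f(\emptyset)=0$, monotone if $f(\{e\}\mid A)\ge 0$ for all $e\in S$, $A\subseteq S$, and submodular if $f(\{e\}\mid A) \ge f(\{e\}\mid B)$ for all $A\subseteq B\subseteq S$ and $e\in S\setminus B$, where $f(A\mid B) = f(A\cup B)-f(B)$. Let $\mathcal{F}$ be the set of normalized, monotone, submodular functions. There are $n$ agents $N=[n]=\{1,\dots,n\}$; agent $i$ has a decision set $X_i\subseteq S$, with $X_1,\dots,X_n$ a partition of $S$. An action profile is $x=(x_1,\dots,x_n)\in X = X_1\times\cdots\times X_n$, valued as $f(x) = f(\{x_1,\dots,x_n\})$; for $M\subseteq N$, $x_M$ denotes $\{x_i : i\in M\}$. Let $x^{\mathrm{opt}}\in\arg\max_{x\in X} f(x)$. An iteration assignment is a function $P:[n]\to[q]$ with $P(i)\le P(j)$ whenever $i<j$; $\mathcal{P}_{n,q}$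 denotes the set of such assignments. The parallelized greedy algorithm with assignment $P$ produces $x^{\mathrm{sol}}$ with $x^{\mathrm{sol}}_i \in \arg\max_{x_i\in X_i} f(x_i \mid x^{\mathrm{sol}}_{\mathcal{N}_i})$, where $\mathcal{N}_i = \{j : P(j) < P(i)\}$; when several greedy outcomes are possible, $x^{\mathrm{sol}}$ is taken to be the worst one (smallest $f$-value). Define $\gamma(f,X,P) = f(x^{\mathrm{sol}})/f(x^{\mathrm{opt}})$, $\gamma(P) = \inf_{f\in\mathcal{F},X}\gamma(f,X,P)$ (infimum over all finite $S$, all such $f$ and all decision sets), and $\rho(n,q) = \sup_{P\in\mathcal{P}_{n,q}}\gamma(P)$. *)

From HB Require Import structures.
From mathcomp Require Import all_boot all_order all_algebra.
From mathcomp Require Import classical_sets reals.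
Set Implicit Arguments. Unset Strict Implicit. Unset Printing Implicit Defensive.
Import Order.TTheory GRing.Theory Num.Theory.
Local Open Scope classical_set_scope.
Local Open Scope ring_scope.

Definition ceil_div (a b : nat) : nat := ((a + b).-1 %/ b)%N.

Section Defs.
Variable R : realType.

Definition marg (S : finType) (f : {set S} -> R) (A B : {set S}) : R :=
  f (A :|: B) - f B.

Definition normalized (S : finType) (f : {set S} -> R) := f finset.set0 = 0.
Definition nonneg_fun (S : finType) (f : {set S} -> R) := forall A, 0 <= f A.
Definition monotone_fun (S : finType) (f : {set S} -> R) :=
  forall (e : S) (A : {set S}), 0 <= marg f [set e] A.
Definition submodular (S : finType) (f : {set S} -> R) :=
  forall (A B : {set S}) (e : S), A \subset B -> e \notin B ->
    marg f [set e] B <= marg f [set e] A.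

Definition in_F (S : finType) (f : {set S} -> R) :=
  [/\ nonneg_fun f, normalized f, monotone_fun f & submodular f].

(* Agents are 'I_n; agent i : 'I_n is agent (i+1) of the paper.
   The partition X_1,...,X_n of S is encoded by blk : S -> 'I_n, with
   X_{i+1} = [set e | blk e == i]; blocks are required to be nonempty. *)
Definition valid_partition (n : nat) (S : finType) (blk : S -> 'I_n) :=
  forall i : 'I_n, exists e : S, blk e = i.

Definition profile (n : nat) (S : finType) (blk : S -> 'I_n) (x : 'I_n -> S) :=
  forall i, blk (x i) = i.

Definition pset (n : nat) (S : finType) (x : 'I_n -> S) : {set S} :=
  [set x i | i : 'I_n].

(* the set x_M for M = N_i = {j | P(j) < P(i)}  (P is 1-based) *)
Definition pred_set (n : nat) (P : nat -> nat) (S : finType) (x : 'I_n -> S)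
  (i : 'I_n) : {set S} :=
  [set x j | j in [set j : 'I_n | (P j.+1 < P i.+1)%N]].

Definition greedy (n : nat) (P : nat -> nat) (S : finType) (blk : S -> 'I_n)
  (f : {set S} -> R) (x : 'I_n -> S) :=
  profile blk x /\
  forall (i : 'I_n) (e : S), blk e = i ->
    marg f [set e] (pred_set P x i) <= marg f [set x i] (pred_set P x i).

Definition fopt (n : nat) (S : finType) (blk : S -> 'I_n) (f : {set S} -> R) : R :=
  sup [set f (pset x) | x in [set x | profile blk x]].

Definition fsol (n : nat) (P : nat -> nat) (S : finType) (blk : S -> 'I_n)
  (f : {set S} -> R) : R :=
  inf [set f (pset x) | x in [set x | greedy P blk f x]].

Definition gamma_inst (n : nat) (P : nat -> nat) (S : finType) (blk : S -> 'I_n)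
  (f : {set S} -> R) : R := fsol P blk f / fopt blk f.

Definition gammaP (n : nat) (P : nat -> nat) : R :=
  inf [set g | exists (S : finType) (blk : S -> 'I_n) (f : {set S} -> R),
         [/\ in_F f, valid_partition blk, 0 < fopt blk f & g = gamma_inst P blk f]].

(* P in P_{n,q}: P : [n] -> [q] nondecreasing (only values on 1..n matter) *)
Definition is_assignment (n q : nat) (P : nat -> nat) :=
  (forall i, (1 <= i <= n)%N -> (1 <= P i <= q)%N) /\
  (forall i j, (1 <= i)%N -> (i < j)%N -> (j <= n)%N -> (P i <= P j)%N).

Definition rho (n q : nat) : R :=
  sup [set gammaP n P | P in [set P | is_assignment n q P]].

End Defs.

Definition Pstar (n q : nat) (i : nat) : nat :=
  let r := ceil_div n q in
  if n == 1 %[mod q] then (if (i < n)%N then ceil_div i (r - 1) else q)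
  else ceil_div i r.

(* Call the load of round t the number of agents playing in round t, plus one
   if some agent plays after round t.  For every round t, a coverage instance
   makes the agents of round t indifferent between one shared element and a
   private element each, so that the worst greedy outcome covers a single
   element while the optimum covers load(t) elements: gamma(P) <= 1 / load(t).
   Conversely, if all loads are at most K, then by submodularity the marginal
   gain of an optimal action against the greedy prefix of the last round is at
   most the greedy gain of its agent's round; summing by rounds and telescoping
   gives f(opt) <= K f(sol).  Hence gamma(P) = 1 / (maximal load).  The loads of
   the rounds 1..L of any assignment add up to n + L - 1 with L <= q, which
   forces a load of at least r (if n = 1 mod q) or r + 1 (otherwise), and P*
   attains this bound. *)

From HB Require Import structures.
From mathcomp Require Import all_boot all_order all_algebra.
From mathcomp Require Import reals.
From mathcomp Require Import zify.
From Stdlib Require Import Lia.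
Import Order.TTheory GRing.Theory Num.Theory.
Local Open Scope ring_scope.
Set Implicit Arguments. Unset Strict Implicit. Unset Printing Implicit Defensive.

Section Submodular.
Variables (R : realType) (S : finType) (f : {set S} -> R).
Hypotheses (f_mono : monotone_fun f) (f_submod : submodular f).

Lemma monotone_le_subset (A B : {set S}) : A \subset B -> f A <= f B.
Proof.
move=> sAB; have -> : B = [set:: enum (B :\: A)] :|: A.
  by rewrite set_enum setUC -{1}(setID B A) (setIidPr sAB).
elim: (enum _) => [|e s IHs]; first by rewrite set_nil set0U.
rewrite set_cons -setUA (le_trans IHs) //.
by have := f_mono e ([set:: s] :|: A); rewrite /marg subr_ge0.
Qed.

Lemma marg1_le_subset (A B : {set S}) e :
  A \subset B -> marg f [set e] B <= marg f [set e] A.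
Proof.
move=> sAB; have [eB | eNB] := boolP (e \in B); last exact: f_submod.
rewrite {1}/marg (setUidPr _) ?sub1set // subrr; exact: f_mono.
Qed.

Lemma le_setU_marg (A B : {set S}) :
  f (A :|: B) <= f B + \sum_(e in A) marg f [set e] B.
Proof.
rewrite -big_enum /= -{1}(set_enum A).
elim: (enum A) => [|e s IHs]; first by rewrite set_nil set0U big_nil addr0.
rewrite set_cons -setUA big_cons addrCA.
have -> : f ([set e] :|: ([set:: s] :|: B)) =
          marg f [set e] ([set:: s] :|: B) + f ([set:: s] :|: B).
  by rewrite /marg subrK.
by apply: lerD IHs; apply: marg1_le_subset; rewrite subsetUr.
Qed.

End Submodular.

Section Extrema.
Variables (R : realType) (n : nat) (S : finType) (blk : S -> 'I_n) (f : {set S} -> R).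

Lemma profile_exists : valid_partition blk -> exists o, profile blk o.
Proof.
move=> blk_onto; have blk_onto' i : exists e, blk e == i.
  by have [e <-] := blk_onto i; exists e.
by exists (fun i => xchoose (blk_onto' i)) => i; apply/eqP/(xchooseP (blk_onto' i)).
Qed.

Lemma fopt_ge o : in_F f -> profile blk o -> f (pset o) <= fopt blk f.
Proof.
case=> _ _ f_mono _ o_prof; apply: ub_le_sup; last by exists o.
by exists (f setT) => _ [x _ <-]; apply: monotone_le_subset; rewrite ?subsetT.
Qed.

Lemma fopt_le (b : R) : valid_partition blk ->
  (forall o, profile blk o -> f (pset o) <= b) -> fopt blk f <= b.
Proof.
move=> /profile_exists [o o_prof] le_b; apply: ge_sup; first by exists (f (pset o)), o.
by move=> _ [x x_prof <-]; apply: le_b.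
Qed.

Lemma fsol_le (P : nat -> nat) x : in_F f -> greedy P blk f x -> fsol P blk f <= f (pset x).
Proof.
case=> f_ge0 _ _ _ x_greedy; apply: ge_inf; last by exists x.
by exists 0 => _ [y _ <-]; apply: f_ge0.
Qed.

Lemma fsol_ge (P : nat -> nat) (b : R) : (exists x, greedy P blk f x) ->
  (forall x, greedy P blk f x -> b <= f (pset x)) -> b <= fsol P blk f.
Proof.
move=> [x x_greedy] ge_b; apply: lb_le_inf; first by exists (f (pset x)), x.
by move=> _ [y y_greedy <-]; apply: ge_b.
Qed.

End Extrema.

Section Rounds.
Variables (n q : nat) (P : nat -> nat).
Hypothesis P_assign : is_assignment n q P.

Definition round (t : nat) : {set 'I_n} := [set i : 'I_n | P i.+1 == t].

Definition load (t : nat) : nat := (#|round t| + (t < P n))%N.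

Lemma assignment_pos (i : 'I_n) : (0 < P i.+1)%N.
Proof. by case: P_assign => range _; case/andP: (range i.+1 (ltn_ord i)). Qed.

Lemma assignment_last_range : (0 < n)%N -> (0 < P n <= q)%N.
Proof. by case: P_assign => range _ n_gt0; apply: range; rewrite n_gt0 leqnn. Qed.

Lemma assignment_mono (i j : 'I_n) : (i <= j)%N -> (P i.+1 <= P j.+1)%N.
Proof.
case: P_assign => _ mono; rewrite leq_eqVlt => /orP[/eqP/val_inj-> // | lt_ij].
exact: mono.
Qed.

Lemma assignment_le_last (i : 'I_n) : (P i.+1 <= P n)%N.
Proof.
case: P_assign => _ mono; have := ltn_ord i; rewrite leq_eqVlt.
by case/orP=> [/eqP-> // | lt_in]; apply: mono.
Qed.

Lemma sum_by_round (V : nmodType) (F : nat -> V) :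
  \sum_(i : 'I_n) F (P i.+1) = \sum_(t < (P n).+1) F t *+ #|round t|.
Proof.
have in_range (i : 'I_n) : (P i.+1 < (P n).+1)%N by rewrite ltnS assignment_le_last.
rewrite (partition_big (fun i => Ordinal (in_range i)) xpredT) //=.
apply: eq_bigr => t _; rewrite -sumr_const; apply: eq_big => [i | i /eqP <- //].
by rewrite inE -val_eqE.
Qed.

End Rounds.

Section GreedyExists.
Variables (R : realType) (n q : nat) (P : nat -> nat) (S : finType).
Variables (blk : S -> 'I_n) (f : {set S} -> R).
Hypothesis P_assign : is_assignment n q P.

Lemma pred_set_agree (x y : 'I_n -> S) (i : 'I_n) :
  (forall j : 'I_n, (j < i)%N -> x j = y j) -> pred_set P x i = pred_set P y i.
Proof.
move=> xy; apply: eq_in_imset => j; rewrite classical_sets.in_setE => lt_ij; apply: xy.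
by rewrite ltnNge; apply: contraTN lt_ij => /(assignment_mono P_assign); rewrite -leqNgt.
Qed.

Definition greedy_upto (k : nat) (x : 'I_n -> S) :=
  profile blk x /\ forall i : 'I_n, (i < k)%N -> forall e, blk e = i ->
    marg f [set e] (pred_set P x i) <= marg f [set x i] (pred_set P x i).

Lemma greedy_upto_succ k x : (k < n)%N -> greedy_upto k x -> exists y, greedy_upto k.+1 y.
Proof.
move=> lt_kn [x_prof x_greedy]; pose i0 : 'I_n := Ordinal lt_kn.
pose B := pred_set P x i0.
have x_i0 : blk (x i0) == i0 by apply/eqP/x_prof.
have [best best_i0 best_max] :=
  arg_maxP (fun e => marg f [set e] B) (x_i0 : (fun e => blk e == i0) (x i0)).
pose y j := if j == i0 then best else x j.
have pred_y (i : 'I_n) : (i <= k)%N -> pred_set P y i = pred_set P x i.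
  move=> le_ik; apply: pred_set_agree => j lt_ji; rewrite /y ifN //.
  by apply: contraTneq lt_ji => ->; rewrite -leqNgt.
exists y; split=> [j | i].
  by rewrite /y; case: eqP => [-> | _]; [exact/eqP | apply: x_prof].
rewrite ltnS leq_eqVlt => /orP[/eqP i_k | lt_ik] e e_i.
  have i_i0 : i = i0 by apply: val_inj.
  by rewrite i_i0 pred_y // /y eqxx; apply: best_max; rewrite e_i i_i0.
rewrite pred_y ?(ltnW lt_ik) // /y ifN; first exact: x_greedy.
by apply: contraTneq lt_ik => ->; rewrite ltnn.
Qed.

Lemma greedy_exists : valid_partition blk -> exists x, greedy P blk f x.
Proof.
move=> /profile_exists [o o_prof].
have upto k : (k <= n)%N -> exists x, greedy_upto k x.
  elim: k => [_ | k IHk lt_kn]; first by exists o.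
  by have [x x_greedy] := IHk (ltnW lt_kn); apply: greedy_upto_succ x_greedy.
have [x [x_prof x_greedy]] := upto n (leqnn n).
by exists x; split=> // i; apply: x_greedy.
Qed.

End GreedyExists.

Section GreedyAnalysis.
Variables (R : realType) (n q : nat) (P : nat -> nat) (S : finType).
Variables (blk : S -> 'I_n) (f : {set S} -> R).
Hypotheses (P_assign : is_assignment n q P) (f_F : in_F f).

Definition prefix (x : 'I_n -> S) (t : nat) : {set S} :=
  [set x j | j in [set j : 'I_n | (P j.+1 < t)%N]].

Definition gain (x : 'I_n -> S) (t : nat) : R := f (prefix x t.+1) - f (prefix x t).

Lemma pred_set_prefix x (i : 'I_n) : pred_set P x i = prefix x (P i.+1).
Proof.
apply/setP=> e; apply/imsetP/imsetP => -[j j_in ->]; exists j => //; move: j_in;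
  by rewrite inE classical_sets.in_setE.
Qed.

Lemma prefix_mono x t1 t2 : (t1 <= t2)%N -> prefix x t1 \subset prefix x t2.
Proof.
move=> le_t12; apply: imsetS; apply/subsetP => j; rewrite !inE => lt_j.
exact: leq_trans lt_j le_t12.
Qed.

Lemma prefix_last x : prefix x (P n).+1 = pset x.
Proof.
apply/setP=> e; apply/imsetP/imsetP => -[j _ ->]; exists j => //.
by rewrite inE ltnS (assignment_le_last P_assign).
Qed.

Lemma gain_ge0 x t : 0 <= gain x t.
Proof.
case: f_F => _ _ f_mono _; rewrite subr_ge0 monotone_le_subset //.
exact: prefix_mono.
Qed.

Lemma marg_le_gain x o (i : 'I_n) : greedy P blk f x -> profile blk o ->
  marg f [set o i] (prefix x (P n)) <= gain x (P i.+1).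
Proof.
case: f_F => _ _ f_mono f_submod [_ x_greedy] o_prof.
have oi_greedy := x_greedy i (o i) (o_prof i); rewrite pred_set_prefix in oi_greedy.
have prefix_i := prefix_mono x (assignment_le_last P_assign i).
rewrite (le_trans (marg1_le_subset f_mono f_submod _ prefix_i)) //.
rewrite (le_trans oi_greedy) // lerB // monotone_le_subset //.
rewrite subUset sub1set prefix_mono // andbT.
by apply/imsetP; exists i; rewrite ?inE.
Qed.

Lemma profile_le_gains x o : greedy P blk f x -> profile blk o ->
  f (pset o) <= f (prefix x (P n)) + \sum_(t < (P n).+1) gain x t *+ #|round n P t|.
Proof.
case: (f_F) => _ _ f_mono f_submod x_greedy o_prof.
rewrite -(sum_by_round P_assign (gain x)).
rewrite (le_trans (monotone_le_subset f_mono (subsetUl (pset o) (prefix x (P n))))) //.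
rewrite (le_trans (le_setU_marg f_mono f_submod _ _)) // lerD2l.
rewrite big_imset /=; last by apply: in2W; apply: can_inj o_prof.
by apply: ler_sum => i _; apply: marg_le_gain.
Qed.

Lemma gains_le_load x (K : nat) : (0 < K)%N -> (forall t, (load n P t <= K)%N) ->
  f (prefix x (P n)) + \sum_(t < (P n).+1) gain x t *+ #|round n P t| <= f (pset x) *+ K.
Proof.
case: f_F => f_ge0 _ _ _ K_gt0 load_le; rewrite big_ord_recr /=.
have early_rounds :
    \sum_(t < P n) gain x t *+ #|round n P t| <= f (prefix x (P n)) *+ K.-1.
  have le_round (t : 'I_(P n)) : (#|round n P t| <= K.-1)%N.
    by have := load_le t; rewrite /load ltn_ord; lia.
  apply: le_trans (_ : _ <= \sum_(t < P n) gain x t *+ K.-1) _.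
    by apply: ler_sum => t _; rewrite ler_wpMn2l ?gain_ge0 ?le_round.
  rewrite sumrMnl ler_wMn2r // -(big_mkord xpredT (gain x)) telescope_sumr //.
  by rewrite gerBl f_ge0.
have last_round : gain x (P n) *+ #|round n P (P n)| <= gain x (P n) *+ K.
  by rewrite ler_wpMn2l ?gain_ge0 //; have := load_le (P n); rewrite /load ltnn addn0.
rewrite addrA (le_trans (lerD (lerD (lexx _) early_rounds) last_round)) //.
by rewrite -mulrS prednK // -mulrnDl /gain prefix_last addrC subrK.
Qed.

Lemma inv_load_le_gamma_inst (K : nat) : (0 < K)%N -> (forall t, (load n P t <= K)%N) ->
  valid_partition blk -> 0 < fopt blk f -> 1 / K%:R <= gamma_inst P blk f.
Proof.
move=> K_gt0 load_le blk_onto fopt_gt0.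
have opt_le x : greedy P blk f x -> fopt blk f <= f (pset x) *+ K.
  move=> x_greedy; apply: fopt_le => // o o_prof.
  exact: le_trans (profile_le_gains x_greedy o_prof) (gains_le_load x K_gt0 load_le).
have sol_ge : fopt blk f / K%:R <= fsol P blk f.
  apply: fsol_ge; first exact: greedy_exists P_assign blk_onto.
  by move=> x x_greedy; rewrite ler_pdivrMr ?ltr0n // mulr_natr opt_le.
by rewrite /gamma_inst ler_pdivlMr // (le_trans _ sol_ge) // mul1r mulrC.
Qed.

End GreedyAnalysis.

Section Coverage.
Variables (R : realType) (U S : finType) (cov : U -> S -> bool).

Definition covered (A : {set S}) : {set U} := [set u | [exists e in A, cov u e]].

Definition coverage (A : {set S}) : R := #|covered A|%:R.

Lemma coveredU (A B : {set S}) : covered (A :|: B) = covered A :|: covered B.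
Proof.
apply/setP=> u; rewrite !inE; apply/existsP/orP => [[e] | [] /existsP[e]].
  by rewrite inE andb_orl => /orP[] ?; [left | right]; apply/existsP; exists e.
- by move=> /andP[eA cue]; exists e; rewrite inE eA.
- by move=> /andP[eB cue]; exists e; rewrite inE eB orbT.
Qed.

Lemma in_covered1 (e : S) u : (u \in covered [set e]) = cov u e.
Proof.
rewrite inE; apply/existsP/idP => [[e'] | cue]; last by exists e; rewrite inE eqxx.
by rewrite inE => /andP[/eqP-> ].
Qed.

Lemma covered_mono (A B : {set S}) : A \subset B -> covered A \subset covered B.
Proof. by move=> /setUidPr <-; rewrite coveredU subsetUl. Qed.

Lemma marg_coverage (e : S) (B : {set S}) :
  marg coverage [set e] B = #|covered [set e] :\: covered B|%:R.
Proof.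
rewrite /marg /coverage coveredU -natrB ?subset_leq_card ?subsetUr //.
by rewrite -cardsDS ?subsetUr // setDUl setDv setU0.
Qed.

Lemma coverage_in_F : in_F coverage.
Proof.
split=> [A | | e A | A B e sAB _]; rewrite ?marg_coverage ?ler0n //.
  by rewrite /normalized /coverage; apply/eqP; rewrite pnatr_eq0 cards_eq0;
    apply/eqP/setP => u; rewrite !inE; apply/existsP => -[e]; rewrite inE.
by rewrite ler_nat subset_leq_card // setDS // covered_mono.
Qed.

End Coverage.

Section TrapInstance.
Variables (R : realType) (n : nat) (P : nat -> nat) (t : nat).
Hypothesis n_gt0 : (0 < n)%N.

(* None is the shared element and Some i the private element of agent i.
   Action (i, false) covers None if i plays in round t or later, and action
   (i, true) covers Some i if i plays in round t. *)
Definition trap_cov (u : option 'I_n) (e : 'I_n * bool) : bool :=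
  if u is Some k then [&& e.2, e.1 == k & P e.1.+1 == t]
  else ~~ e.2 && (t <= P e.1.+1)%N.

Local Notation trap := (coverage R trap_cov).

Definition trap_greedy (i : 'I_n) : 'I_n * bool := (i, false).

Definition trap_opt (i : 'I_n) : 'I_n * bool := (i, P i.+1 == t).

Lemma trap_valid : valid_partition (@fst 'I_n bool).
Proof. by move=> i; exists (i, false). Qed.

Lemma greedy_trap : greedy P (@fst 'I_n bool) trap trap_greedy.
Proof.
split=> // i [i' b] /= ->; case: b; last exact: lexx.
have [_ _ trap_mono _] := coverage_in_F R trap_cov.
have [round_i | not_round] := eqVneq (P i.+1) t; last first.
  rewrite (le_trans _ (trap_mono _ _)) // marg_coverage.
  rewrite (_ : covered _ [set (i, true)] = set0) ?set0D ?cards0 //.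
  by apply/setP => -[k|]; rewrite in_covered1 inE /= ?(negbTE not_round) ?andbF.
rewrite !marg_coverage ler_nat; apply: (@leq_trans 1).
  rewrite -(cards1 (Some i)) (leq_trans (subset_leq_card (subsetDl _ _))) //.
  apply/subset_leq_card/subsetP => -[k|]; rewrite in_covered1 //= inE.
  by case/andP=> /eqP->.
rewrite card_gt0; apply/set0Pn; exists None.
rewrite in_setD in_covered1 /= round_i leqnn andbT inE pred_set_prefix.
apply/negP => /existsP[e /andP[/imsetP[j]]].
by rewrite inE round_i => lt_jt -> /=; rewrite leqNgt lt_jt.
Qed.

Lemma trap_greedy_value : trap (pset trap_greedy) <= 1.
Proof.
rewrite /coverage lern1 -(cards1 (None : option 'I_n)) subset_leq_card //.
by apply/subsetP => -[k|]; rewrite ?inE // => /existsP[e /andP[/imsetP[j _ ->]]] /=.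
Qed.

Lemma trap_opt_value : (load n P t)%:R <= trap (pset trap_opt).
Proof.
have opt_covers u i : trap_cov u (trap_opt i) -> u \in covered trap_cov (pset trap_opt).
  by move=> cui; rewrite inE; apply/existsP; exists (trap_opt i); rewrite imset_f.
have round_covered : Some @: round n P t \subset covered trap_cov (pset trap_opt).
  apply/subsetP => u /imsetP[i]; rewrite inE => round_i ->.
  by apply: (opt_covers _ i); rewrite /= round_i eqxx.
rewrite /load /coverage ler_nat addnC.
have [later | _] := ltnP t (P n); last first.
  by rewrite add0n -(card_imset _ (@Some_inj _)) subset_leq_card.
have last_agent : (n.-1 < n)%N by rewrite ltn_predL.
have None_covered : None \in covered trap_cov (pset trap_opt).
  apply: (opt_covers _ (Ordinal last_agent)); rewrite /= prednK //.
  by rewrite (gtn_eqF later) (ltnW later).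
have None_new : None \notin Some @: round n P t by apply/imsetP => -[].
have card_None : #|None |: Some @: round n P t| = (1 + #|round n P t|)%N.
  by rewrite cardsU1 (card_imset _ (@Some_inj _)) None_new.
by rewrite -card_None subset_leq_card // subUset sub1set None_covered.
Qed.

Lemma trap_gamma : (0 < load n P t)%N ->
  0 < fopt (@fst 'I_n bool) trap /\
  gamma_inst P (@fst 'I_n bool) trap <= 1 / (load n P t)%:R.
Proof.
move=> load_gt0; have trap_F := coverage_in_F R trap_cov.
have opt_ge : (load n P t)%:R <= fopt (@fst 'I_n bool) trap.
  by rewrite (le_trans trap_opt_value) // fopt_ge.
have fopt_gt0 : 0 < fopt (@fst 'I_n bool) trap by rewrite (lt_le_trans _ opt_ge) ?ltr0n.
split=> //; rewrite /gamma_inst ler_pdivrMr //.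
rewrite (le_trans (fsol_le trap_F greedy_trap)) //.
by rewrite (le_trans trap_greedy_value) // mul1r mulrC ler_pdivlMr ?ltr0n // mul1r.
Qed.

End TrapInstance.

Section GammaP.
Variables (R : realType) (n q : nat) (P : nat -> nat).
Hypotheses (P_assign : is_assignment n q P) (n_gt0 : (0 < n)%N).

Lemma gamma_inst_ge0 (S : finType) (blk : S -> 'I_n) (f : {set S} -> R) :
  in_F f -> valid_partition blk -> 0 < fopt blk f -> 0 <= gamma_inst P blk f.
Proof.
move=> f_F blk_onto fopt_gt0; rewrite /gamma_inst divr_ge0 ?(ltW fopt_gt0) //.
apply: fsol_ge; first exact: greedy_exists P_assign blk_onto.
by case: f_F => f_ge0 _ _ _ x _; apply: f_ge0.
Qed.

Lemma gammaP_le_inv_load t : (0 < load n P t)%N -> gammaP R n P <= 1 / (load n P t)%:R.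
Proof.
move=> load_gt0; have [fopt_gt0 gamma_le] := @trap_gamma R n P t n_gt0 load_gt0.
rewrite (le_trans _ gamma_le) //; apply: ge_inf; last first.
  by exists _, (@fst 'I_n bool), (coverage R (trap_cov P t)); split;
    [apply: coverage_in_F | apply: trap_valid | | ].
by exists 0 => _ [S [blk [f [f_F blk_onto f_gt0 ->]]]]; apply: gamma_inst_ge0.
Qed.

Lemma inv_load_le_gammaP (K : nat) : (0 < K)%N -> (forall t, (load n P t <= K)%N) ->
  1 / K%:R <= gammaP R n P.
Proof.
move=> K_gt0 load_le; have last_agent : (n.-1 < n)%N by rewrite ltn_predL.
have load_last : (0 < load n P (P n))%N.
  rewrite /load ltnn addn0 card_gt0; apply/set0Pn; exists (Ordinal last_agent).
  by rewrite inE /= prednK.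
have [fopt_gt0 _] := @trap_gamma R n P (P n) n_gt0 load_last.
apply: lb_le_inf.
  by eexists; exists _, (@fst 'I_n bool), (coverage R (trap_cov P (P n))); split;
    [apply: coverage_in_F | apply: trap_valid | | ].
move=> _ [S [blk [f [f_F blk_onto f_gt0 ->]]]].
exact (inv_load_le_gamma_inst P_assign f_F K_gt0 load_le blk_onto f_gt0).
Qed.

End GammaP.

Section HeavyRound.
Variables (n q : nat) (P : nat -> nat).
Hypotheses (P_assign : is_assignment n q P) (n_gt0 : (0 < n)%N).

Lemma sum_round_card : (\sum_(t < P n) #|round n P t.+1|)%N = n.
Proof.
have := sum_by_round P_assign (fun _ => 1%N); rewrite big_ord_recl.
have -> : round n P 0 = set0.
  by apply/setP => i; rewrite !inE gtn_eqF // (assignment_pos P_assign).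
rewrite cards0 sum_nat_const card_ord muln1 mulr0n add0r => n_eq.
by rewrite [RHS]n_eq; apply: eq_bigr => t _; rewrite natn.
Qed.

Lemma exists_heavy_round (K : nat) :
  (K * P n + 1 < n + 2 * P n)%N -> exists t, (K <= load n P t)%N.
Proof.
move=> heavy.
have [/existsP[t heavy_t] | /existsPn light] :=
  boolP [exists t : 'I_(P n), (K <= load n P t.+1)%N].
  by exists t.+1.
have : (\sum_(t < P n) (load n P t.+1).+1 <= \sum_(t < P n) K)%N.
  by apply: leq_sum => t _; rewrite ltnNge light.
rewrite sum_nat_const card_ord.
under eq_bigr do rewrite /load -addnS.
rewrite big_split /= sum_round_card.
have [L PnE] : exists L, P n = L.+1.
  have /andP[Pn_gt0 _] := assignment_last_range P_assign n_gt0.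
  by exists (P n).-1; rewrite prednK.
rewrite PnE big_ord_recr /= ltnn in heavy *.
under eq_bigr do rewrite ltnS ltn_ord.
rewrite sum_nat_const card_ord; lia.
Qed.

End HeavyRound.

Lemma ceil_div_succ i d : (0 < d)%N -> ceil_div i.+1 d = (i %/ d).+1.
Proof. by move=> d_gt0; rewrite /ceil_div addSn /= divnDr ?dvdnn // divnn d_gt0 addn1. Qed.

Lemma ceil_div_mono m1 m2 d : (m1 <= m2)%N -> (ceil_div m1 d <= ceil_div m2 d)%N.
Proof. by move=> le_m12; apply: leq_div2r; rewrite -!subn1 leq_sub2r // leq_add2r. Qed.

Lemma ceil_div_range i d k : (0 < d)%N -> (0 < i <= d * k)%N -> (0 < ceil_div i d <= k)%N.
Proof.
case: i => // i d_gt0 /= le_idk; by rewrite ceil_div_succ //= ltn_divLR // mulnC.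
Qed.

Lemma ceil_div_bounds m d : (0 < d)%N -> (0 < m)%N ->
  ((ceil_div m d).-1 * d < m <= ceil_div m d * d)%N.
Proof.
move=> d_gt0 m_gt0; case: m m_gt0 => // m _; rewrite ceil_div_succ //=.
by rewrite mulSn; have := divn_eq m d; have := ltn_pmod m d_gt0; lia.
Qed.

Lemma card_quotient_fiber n d c (A : {set 'I_n}) : (0 < d)%N ->
  {in A, forall i : 'I_n, i %/ d = c}%N -> (#|A| <= d)%N.
Proof.
move=> d_gt0 A_fiber; pose rem (i : 'I_n) : 'I_d := Ordinal (ltn_pmod i d_gt0).
rewrite -(card_in_imset (f := rem)); first by rewrite (leq_trans (max_card _)) ?card_ord.
move=> i j iA jA /(congr1 val) /= eq_mod; apply: ord_inj.
by rewrite (divn_eq i d) (divn_eq j d) eq_mod !A_fiber.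
Qed.

Section Pstar.
Variables (n q : nat).
Hypotheses (q_gt0 : (0 < q)%N) (q_le_n : (q <= n)%N).

Local Notation r := (ceil_div n q).

Let n_gt0 : (0 < n)%N. Proof. exact: leq_trans q_le_n. Qed.

Let ceil_gt0 : (0 < r)%N.
Proof.
have /andP[_ hi] := ceil_div_bounds q_gt0 n_gt0.
by rewrite lt0n; apply: contraTneq hi => ->; rewrite mul0n -ltnNge.
Qed.

Lemma mod1_ceil_div : (n == 1 %[mod q]) = (n == r.-1 * q + 1)%N.
Proof.
have /andP[lo hi] := ceil_div_bounds q_gt0 n_gt0.
have [m nE /andP[m_gt0 m_le_q]] : exists2 m, n = (r.-1 * q + m)%N & (0 < m <= q)%N.
  by exists (n - r.-1 * q)%N; move: hi; rewrite -{1}(prednK ceil_gt0) mulSn; lia.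
have -> : (n == r.-1 * q + 1)%N = (m == 1) by rewrite {1}nE eqn_add2l.
rewrite {1}nE modnMDl.
have [q_le1 | q_gt1] := leqP q 1.
  have q1 : q = 1%N by lia.
  have -> : m = 1%N by lia.
  by rewrite q1.
rewrite [(1 %% q)%N]modn_small //; case: ltngtP m_le_q => // [m_lt_q | ->] _.
  by rewrite modn_small.
by rewrite modnn (gtn_eqF q_gt1).
Qed.

Lemma PstarE i : Pstar n q i =
  if n == 1 %[mod q] then (if (i < n)%N then ceil_div i r.-1 else q) else ceil_div i r.
Proof. by rewrite /Pstar subn1. Qed.

Lemma Pstar_range i : (0 < i <= n)%N -> (0 < Pstar n q i <= q)%N.
Proof.
move=> /andP[i_gt0 le_in]; have /andP[_ hi] := ceil_div_bounds q_gt0 n_gt0.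
rewrite PstarE; case: ifP => [mod1 | _].
  2: by apply: ceil_div_range; rewrite ?i_gt0 ?(leq_trans le_in hi).
case: (ltnP i n) => [lt_in | _]; last by rewrite q_gt0 leqnn.
move: mod1; rewrite mod1_ceil_div => /eqP nE.
have : (0 < r.-1 * q)%N by lia.
rewrite muln_gt0 => /andP[s_gt0 _]; apply: ceil_div_range => //; lia.
Qed.

Lemma Pstar_assignment : is_assignment n q (Pstar n q).
Proof.
split=> [| i j i_gt0 lt_ij le_jn]; first exact: Pstar_range.
have lt_in : (i < n)%N := leq_trans lt_ij le_jn.
have := Pstar_range (i := i); rewrite i_gt0 (ltnW lt_in) => /(_ isT).
rewrite !PstarE; case: ifP => _; last by rewrite ceil_div_mono // ltnW.
rewrite lt_in => /andP[_ le_iq]; case: ifP => // _.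
by rewrite ceil_div_mono // ltnW.
Qed.

Definition optimal_load : nat := if n == 1 %[mod q] then r else r.+1.

Lemma Pstar_round_card t : n != 1 %[mod q] -> (#|round n (Pstar n q) t| <= r)%N.
Proof.
move=> /negbTE mod1; apply: (card_quotient_fiber (c := t.-1) ceil_gt0) => i.
by rewrite inE PstarE mod1 ceil_div_succ // => /eqP <-.
Qed.

Let early : {set 'I_n} := [set i : 'I_n | (i.+1 < n)%N].

Section Mod1.
Hypothesis mod1 : n == 1 %[mod q].

Lemma Pstar_last : Pstar n q n = q.
Proof. by rewrite PstarE mod1 ltnn. Qed.

Lemma Pstar_early_card t : (#|round n (Pstar n q) t :&: early| <= r.-1)%N.
Proof.
have nE : n = (r.-1 * q + 1)%N by apply/eqP; rewrite -mod1_ceil_div.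
have [s0 | s_gt0] := posnP r.-1.
  rewrite s0 leqn0 cards_eq0; apply/eqP/setP => i; rewrite !inE.
  by apply/negbTE/nandP; right; rewrite -leqNgt; move: nE; rewrite s0; lia.
apply: (card_quotient_fiber (c := t.-1) s_gt0) => i; rewrite !inE PstarE mod1.
by case/andP=> + early_i; rewrite early_i ceil_div_succ // => /eqP <-.
Qed.

Lemma Pstar_late_card t : (#|round n (Pstar n q) t :\: early| + (t < q) <= 1)%N.
Proof.
have [lt_tq | le_qt] := ltnP t q.
  rewrite addn1 ltnS leqn0 cards_eq0; apply/eqP/setP => i; rewrite !inE PstarE mod1.
  by case: ltnP => //= _; rewrite gtn_eqF.
rewrite addn0; apply/card_le1_eqP => i j; rewrite !inE -!leqNgt => /andP[+ _] /andP[+ _].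
by move=> le_ni le_nj; apply: ord_inj; have := ltn_ord i; have := ltn_ord j; lia.
Qed.

End Mod1.

Lemma Pstar_load_le t : (load n (Pstar n q) t <= optimal_load)%N.
Proof.
rewrite /load /optimal_load; case: ifP => [mod1 | /negbT not_mod1].
  rewrite Pstar_last // -(cardsID early) -addnA.
  have := Pstar_early_card mod1 t; have := Pstar_late_card mod1 t; lia.
by rewrite -[r.+1]addn1 leq_add ?Pstar_round_card ?leq_b1.
Qed.

Lemma optimal_load_gt0 : (0 < optimal_load)%N.
Proof. by rewrite /optimal_load; case: ifP. Qed.

Lemma optimal_load_heavy L : (0 < L <= q)%N -> (optimal_load * L + 1 < n + 2 * L)%N.
Proof.
move=> /andP[L_gt0 le_Lq]; have /andP[lo _] := ceil_div_bounds q_gt0 n_gt0.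
have split_r : (r * L = r.-1 * L + L)%N by rewrite -{1}(prednK ceil_gt0) mulSn addnC.
have := leq_mul (leqnn r.-1) le_Lq; rewrite /optimal_load mod1_ceil_div.
by case: eqP => [nE | nE]; rewrite ?mulSn; lia.
Qed.

End Pstar.

Lemma rho_attained (R : realType) n q (P0 : nat -> nat) (v : R) :
  is_assignment n q P0 -> gammaP R n P0 = v ->
  (forall P, is_assignment n q P -> gammaP R n P <= v) -> rho R n q = v.
Proof.
move=> P0_assign gammaP0 gammaP_le; apply/eqP; rewrite eq_le; apply/andP; split.
  apply: ge_sup; first by exists (gammaP R n P0), P0.
  by move=> _ [P P_assign <-]; apply: gammaP_le.
rewrite -{1}gammaP0; apply: ub_le_sup; last by exists P0.
by exists v => _ [P P_assign <-]; apply: gammaP_le.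
Qed.

Theorem theorem1 (R : realType) (n q : nat) :
  (1 <= q)%N -> (q <= n)%N ->
  let r := ceil_div n q in
  let v : R := if n == 1 %[mod q] then 1 / r%:R else 1 / r.+1%:R in
  rho R n q = v /\ is_assignment n q (Pstar n q) /\ gammaP R n (Pstar n q) = v.
Proof.
move=> q_gt0 q_le_n r v.
have n_gt0 : (0 < n)%N := leq_trans q_gt0 q_le_n.
have v_opt : v = 1 / (optimal_load n q)%:R by rewrite /v /optimal_load; case: ifP.
have opt_gt0 := optimal_load_gt0 q_gt0 q_le_n.
have Pstar_assign := Pstar_assignment q_gt0 q_le_n.
have gammaP_le P : is_assignment n q P -> gammaP R n P <= v.
  move=> P_assign; have Pn_range := assignment_last_range P_assign n_gt0.
  have [t heavy_t] :=
    exists_heavy_round P_assign n_gt0 (optimal_load_heavy q_gt0 q_le_n Pn_range).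
  have load_gt0 := leq_trans opt_gt0 heavy_t.
  rewrite v_opt (le_trans (gammaP_le_inv_load R P_assign n_gt0 load_gt0)) //.
  by rewrite !div1r lef_pV2 ?posrE ?ltr0n // ler_nat.
have gammaP_Pstar : gammaP R n (Pstar n q) = v.
  apply/eqP; rewrite eq_le gammaP_le //= v_opt.
  exact: (inv_load_le_gammaP R Pstar_assign n_gt0 opt_gt0 (Pstar_load_le q_gt0 q_le_n)).
by split; [apply: rho_attained gammaP_Pstar gammaP_le | split].
Qed.
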